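(* Let $T$ be a node-weighted MFQST with Steiner point cost $c>0$. Let $P$ be a path $u=x_0,x_1,\dots,x_{p+1}=v$ in $T$ ($p\ge0$) whose interior nodes $x_1,\dots,x_p$ are all Steiner points of degree $2$. Let $f$ be the common flow on the edges of $P$. Then $$p(p+1)\le\frac{f\,|uv|^2}{c}\le(p+2)(p+1).$$
   Context: Let $Z=\{z_1,\dots,z_n\}\subset\mathbb{R}^2$ ($n\ge 1$) be a set of sources and $z_{BS}\in\mathbb{R}^2\setminus Z$ a sink; each source has supply $1$. A flow-dependent quadratic Steiner tree (FQST) consists of a finite set $S\subset\mathbb{R}^2$ of Steiner points and a tree $T$ with vertex set $Z\cup S\cup\{z_{BS}\}$ whose edges are directed towards $z_{BS}$. Every node other than the sink has exactly one out-edge, and the sink has none. Each edge $e$ carries a positive flow $f(e)$ such that: - at each source, the flow on its out-edge minus the total flow on its in-edges equals $1$; - at each Steiner point, the out-flow equals the total in-flow; - the sink receives total flow $n$. The cost is $L(T)=\sum_{e\in E(T)} f(e)|e|^2$. For a fixed $c>0$, a node-weighted MFQST is an FQST minimising $L_c(T)=L(T)+c|S|$ over all FQSTs (any finite $S$, any topology). *)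

From Stdlib Require Import Reals Lra Lia List Arith.
Import ListNotations.
Open Scope R_scope.

Definition point : Type := (R * R)%type.

Definition dist2 (a b : point) : R :=
  (fst a - fst b) ^ 2 + (snd a - snd b) ^ 2.

Fixpoint rsum (f : nat -> R) (k : nat) : R :=
  match k with
  | O => 0
  | S k' => rsum f k' + f k'
  end.

Fixpoint ncount (P : nat -> bool) (k : nat) : nat :=
  match k with
  | O => O
  | S k' => (ncount P k' + (if P k' then 1 else 0))%nat
  end.

(* Nodes are indexed by nat:  0..n-1 are the sources (n = length Z),
   n..n+nS-1 are the Steiner points (position spt (v-n)), and
   n+nS is the sink.  Every non-sink node v has the unique out-edge
   (v, nxt v) carrying flow fl v. *)
Record FQST (Z : list point) (zBS : point) : Type := {
  nS  : nat;
  spt : nat -> point;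
  nxt : nat -> nat;
  fl  : nat -> R;
  spt_inj : forall i j, (i < nS)%nat -> (j < nS)%nat -> spt i = spt j -> i = j;
  spt_notZ : forall i, (i < nS)%nat -> ~ In (spt i) Z;
  spt_notBS : forall i, (i < nS)%nat -> spt i <> zBS;
  nxt_range : forall v, (v < length Z + nS)%nat -> (nxt v <= length Z + nS)%nat;
  (* tree: every node reaches the sink along out-edges (so no cycles) *)
  reach_sink : forall v, (v < length Z + nS)%nat ->
      exists k, Nat.iter k nxt v = (length Z + nS)%nat;
  fl_pos : forall v, (v < length Z + nS)%nat -> 0 < fl v;
  cons_source : forall v, (v < length Z)%nat ->
      fl v - rsum (fun u => if Nat.eqb (nxt u) v then fl u else 0)
                  (length Z + nS) = 1;
  cons_steiner : forall v, (length Z <= v < length Z + nS)%nat ->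
      fl v = rsum (fun u => if Nat.eqb (nxt u) v then fl u else 0)
                  (length Z + nS);
  cons_sink :
      rsum (fun u => if Nat.eqb (nxt u) (length Z + nS) then fl u else 0)
           (length Z + nS) = INR (length Z)
}.

Arguments nS {Z zBS}.
Arguments spt {Z zBS}.
Arguments nxt {Z zBS}.
Arguments fl {Z zBS}.

Section FQSTdefs.
Context {Z : list point} {zBS : point}.

Definition sink (T : FQST Z zBS) : nat := (length Z + nS T)%nat.

Definition is_node (T : FQST Z zBS) (v : nat) : Prop := (v <= sink T)%nat.

Definition is_steiner (T : FQST Z zBS) (v : nat) : Prop :=
  (length Z <= v < sink T)%nat.

Definition node_pos (T : FQST Z zBS) (v : nat) : point :=
  if Nat.ltb v (length Z) then nth v Z (0, 0)
  else if Nat.ltb v (sink T) then spt T (v - length Z)%nat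
  else zBS.

Definition cost (T : FQST Z zBS) : R :=
  rsum (fun v => fl T v * dist2 (node_pos T v) (node_pos T (nxt T v))) (sink T).

Definition costc (c : R) (T : FQST Z zBS) : R := cost T + c * INR (nS T).

Definition is_MFQST (c : R) (T : FQST Z zBS) : Prop :=
  forall T' : FQST Z zBS, costc c T <= costc c T'.

Definition indeg (T : FQST Z zBS) (v : nat) : nat :=
  ncount (fun u => Nat.eqb (nxt T u) v) (sink T).
Definition degree (T : FQST Z zBS) (v : nat) : nat :=
  (indeg T v + (if Nat.ltb v (sink T) then 1 else 0))%nat.

Definition adjacent (T : FQST Z zBS) (a b : nat) : Prop :=
  ((a < sink T)%nat /\ nxt T a = b) \/ ((b < sink T)%nat /\ nxt T b = a).

Definition edge_flow (T : FQST Z zBS) (a b : nat) : R :=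
  if andb (Nat.ltb a (sink T)) (Nat.eqb (nxt T a) b) then fl T a else fl T b.

Definition is_path (T : FQST Z zBS) (p : nat) (x : nat -> nat) : Prop :=
  (forall i, (i <= p + 1)%nat -> is_node T (x i)) /\
  (forall i j, (i <= p + 1)%nat -> (j <= p + 1)%nat -> x i = x j -> i = j) /\
  (forall i, (i <= p)%nat -> adjacent T (x i) (x (S i))).

End FQSTdefs.

(* Let u = x_0, x_1, ..., x_{p+1} = v be a path of T whose interior nodes are
   degree-2 Steiner points, all edges carrying flow f, and write D = |uv|^2
   and L = sum_k |x_k x_{k+1}|^2.  By Cauchy-Schwarz, D <= (p+1) L.
   - Contraction: delete the Steiner point x_1 and place x_2,...,x_p evenly
     on the segment uv.  The new tree has cost at most f D / p (up to an
     arbitrarily small perturbation) and one Steiner point fewer, so by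
     minimality f L + c <= f D / p, whence p (p+1) <= f D / c.
   - Subdivision: insert one extra Steiner point and place the p+1 interior
     points evenly on uv, so f L <= c + f D / (p+2), whence f D / c <= (p+1)(p+2).
   The perturbation is needed because Steiner points must avoid the sources,
   the sink and each other; it is removed by a limit argument. *)

From Stdlib Require Import Reals List Lra Lia Arith.
Open Scope R_scope.

(** * Finite sums *)

Lemma rsum_ext g h k : (forall i, (i < k)%nat -> g i = h i) -> rsum g k = rsum h k.
Proof.
  induction k as [|k IH]; intros H; simpl; auto.
  rewrite IH by (intros; apply H; lia). rewrite H by lia. reflexivity.
Qed.

Lemma rsum_S g k : rsum g (S k) = rsum g k + g k.
Proof. reflexivity. Qed.

Lemma rsum_plus g h k : rsum (fun i => g i + h i) k = rsum g k + rsum h k.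
Proof. induction k; simpl; lra. Qed.

Lemma rsum_zero k : rsum (fun _ => 0) k = 0.
Proof. induction k; simpl; lra. Qed.

Lemma rsum_const a k : rsum (fun _ => a) k = INR k * a.
Proof. induction k; rewrite ?rsum_S, ?S_INR; simpl; lra. Qed.

Lemma rsum_scal a g k : rsum (fun i => a * g i) k = a * rsum g k.
Proof. induction k; simpl; lra. Qed.

Lemma rsum_nonneg g k : (forall i, (i < k)%nat -> 0 <= g i) -> 0 <= rsum g k.
Proof.
  induction k as [|k IH]; intros H; simpl; [lra|].
  pose proof (H k ltac:(lia)). pose proof (IH ltac:(intros; apply H; lia)). lra.
Qed.

Lemma rsum_shift g k : rsum g (S k) = g 0%nat + rsum (fun i => g (S i)) k.
Proof. induction k; simpl in *; lra. Qed.

Lemma rsum_tele h m : rsum (fun k => h k - h (S k)) m = h 0%nat - h m.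
Proof. induction m; simpl; lra. Qed.

Lemma rsum_change g h k a : (a < k)%nat ->
  (forall i, (i < k)%nat -> i <> a -> g i = h i) ->
  rsum g k = rsum h k + g a - h a.
Proof.
  induction k as [|k IH]; intros Ha H; [lia|]. simpl.
  destruct (Nat.eq_dec k a) as [->|Hka].
  - rewrite (rsum_ext g h a) by (intros; apply H; lia). lra.
  - rewrite IH by (try lia; intros; apply H; lia). rewrite (H k) by lia. lra.
Qed.

Lemma rsum_skip g k r : (r <= k)%nat ->
  rsum g (S k) = rsum (fun i => g (if Nat.ltb i r then i else S i)) k + g r.
Proof.
  induction k as [|k IH]; intros Hr.
  - replace r with 0%nat by lia. simpl. lra.
  - rewrite rsum_S. destruct (Nat.eq_dec r (S k)) as [->|Hr'].
    + rewrite (rsum_ext (fun i => g (if Nat.ltb i (S k) then i else S i)) g (S k));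
        [reflexivity|].
      intros i Hi. destruct (Nat.ltb_spec i (S k)); [reflexivity|lia].
    + rewrite IH by lia. rewrite (rsum_S _ k). destruct (Nat.ltb_spec k r); [lia|]. lra.
Qed.

(** * Plane geometry *)

Lemma dist2_sym a b : dist2 a b = dist2 b a.
Proof. unfold dist2; ring. Qed.

Lemma dist2_nonneg a b : 0 <= dist2 a b.
Proof.
  unfold dist2. pose proof (pow2_ge_0 (fst a - fst b)). pose proof (pow2_ge_0 (snd a - snd b)).
  lra.
Qed.

Lemma sq_pos x : x <> 0 -> 0 < x ^ 2.
Proof. intros H. rewrite <- Rsqr_pow2. now apply Rsqr_pos_lt. Qed.

Lemma dist2_pos a b : a <> b -> 0 < dist2 a b.
Proof.
  destruct a as [a1 a2], b as [b1 b2]; unfold dist2; simpl; intros Hab.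
  pose proof (pow2_ge_0 (a1 - b1)). pose proof (pow2_ge_0 (a2 - b2)).
  destruct (Req_dec a1 b1) as [->|H1].
  - assert (Hd : a2 - b2 <> 0) by (intros E; apply Hab; f_equal; lra).
    pose proof (sq_pos _ Hd). lra.
  - assert (Hd : a1 - b1 <> 0) by lra. pose proof (sq_pos _ Hd). lra.
Qed.

(* Inductive step of the Cauchy-Schwarz inequality (sum g)^2 <= m * sum g^2. *)
Lemma cs_step M S2 s a : 0 <= M -> 0 <= S2 -> s ^ 2 <= M * S2 -> (M = 0 -> s = 0) ->
  (s + a) ^ 2 <= (M + 1) * (S2 + a ^ 2).
Proof.
  intros HM HS H H0. destruct (Req_dec M 0) as [E|E].
  - rewrite (H0 E), E. nra.
  - assert (M * (S2 + M * a ^ 2 - 2 * s * a) >= 0) by (pose proof (pow2_ge_0 (s - M * a)); nra).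
    assert (S2 + M * a ^ 2 - 2 * s * a >= 0) by nra.
    nra.
Qed.

Lemma cauchy_schwarz g m : (rsum g m) ^ 2 <= INR m * rsum (fun k => g k ^ 2) m.
Proof.
  induction m as [|m IH]; rewrite ?rsum_S; [simpl; lra|].
  rewrite S_INR. apply cs_step; auto.
  - apply pos_INR.
  - apply rsum_nonneg; intros; nra.
  - intros E. destruct m; [reflexivity|]. pose proof (lt_0_INR (S m) ltac:(lia)). lra.
Qed.

Lemma polygon_cs (Q : nat -> point) m :
  dist2 (Q 0%nat) (Q m) <= INR m * rsum (fun k => dist2 (Q k) (Q (S k))) m.
Proof.
  unfold dist2. rewrite rsum_plus.
  pose proof (cauchy_schwarz (fun k => fst (Q k) - fst (Q (S k))) m) as H1.
  pose proof (cauchy_schwarz (fun k => snd (Q k) - snd (Q (S k))) m) as H2.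
  rewrite (rsum_tele (fun k => fst (Q k))) in H1.
  rewrite (rsum_tele (fun k => snd (Q k))) in H2.
  lra.
Qed.

Definition seg_point (u v : point) (t : R) : point :=
  (fst u + t * (fst v - fst u), snd u + t * (snd v - snd u)).

Lemma dist2_seg_point u v s t :
  dist2 (seg_point u v s) (seg_point u v t) = (s - t) ^ 2 * dist2 u v.
Proof. unfold dist2, seg_point; simpl. ring. Qed.

Lemma seg_point0 u v : seg_point u v 0 = u.
Proof. destruct u; unfold seg_point; simpl; f_equal; ring. Qed.

Lemma seg_point1 u v : seg_point u v 1 = v.
Proof. destruct u, v; unfold seg_point; simpl; f_equal; ring. Qed.

(* The parameter of the orthogonal projection of z on the line uv; it
   recovers t from seg_point u v t. *)
Definition seg_param (u v z : point) : R :=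
  ((fst z - fst u) * (fst v - fst u) + (snd z - snd u) * (snd v - snd u)) / dist2 u v.

Lemma seg_param_point u v t : u <> v -> seg_param u v (seg_point u v t) = t.
Proof.
  intros H. pose proof (dist2_pos u v H). unfold seg_param, seg_point; simpl.
  unfold dist2 in *. field. lra.
Qed.

Lemma seg_point_inj u v s t : u <> v -> seg_point u v s = seg_point u v t -> s = t.
Proof.
  intros H E. rewrite <- (seg_param_point u v s H), <- (seg_param_point u v t H), E.
  reflexivity.
Qed.

Lemma avoid_list (B : list R) (d : R) : 0 < d ->
  exists e, 0 < e < d /\ forall b, In b B -> b <> e.
Proof.
  revert d; induction B as [|b B IH]; intros d Hd.
  - exists (d / 2). split; [lra|]. intros b [].
  - destruct (Rlt_or_le 0 b) as [Hb|Hb].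
    + destruct (IH (Rmin d b)) as [e [He1 He2]]; [apply Rmin_glb_lt; lra|].
      pose proof (Rmin_l d b). pose proof (Rmin_r d b).
      exists e. split; [lra|]. intros b' [<-|Hin]; [lra|auto].
    + destruct (IH d Hd) as [e [He1 He2]]. exists e. split; auto.
      intros b' [<-|Hin]; [lra|auto].
Qed.

Lemma limit_arg (A c K : R) : 0 <= K ->
  (forall d, 0 < d -> exists e, 0 < e < d /\ A <= c + K * e ^ 2) -> A <= c.
Proof.
  intros HK H. destruct (Rle_or_lt A c) as [|Hlt]; auto. exfalso.
  set (d := Rmin 1 ((A - c) / (K + 1))).
  assert (Hq : 0 < (A - c) / (K + 1)) by (apply Rdiv_lt_0_compat; lra).
  assert (Hd : 0 < d) by (apply Rmin_glb_lt; lra).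
  destruct (H d Hd) as [e [He HA]].
  pose proof (Rmin_l 1 ((A - c) / (K + 1))). pose proof (Rmin_r 1 ((A - c) / (K + 1))).
  assert (He' : e * (K + 1) < A - c).
  { apply (Rmult_lt_reg_r (/ (K + 1))); [apply Rinv_0_lt_compat; lra|].
    rewrite Rmult_assoc, Rinv_r by lra. unfold d, Rdiv in *. lra. }
  assert (K * e ^ 2 <= K * e) by (simpl; unfold d in *; nra). nra.
Qed.

Fixpoint occurs (x : nat -> nat) (w m : nat) : bool :=
  match m with O => false | S m' => Nat.eqb (x m') w || occurs x w m' end.

Fixpoint find_index (x : nat -> nat) (w m : nat) : nat :=
  match m with
  | O => O
  | S m' => if Nat.eqb (x m') w then m' else find_index x w m'
  end.

Lemma occurs_true x w m : occurs x w m = true <-> exists k, (k < m)%nat /\ x k = w.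
Proof.
  induction m as [|m IH]; simpl.
  - split; [discriminate|intros [k [Hk _]]; lia].
  - rewrite Bool.orb_true_iff, Nat.eqb_eq, IH. split.
    + intros [H|[k [Hk H]]]; [exists m|exists k]; split; auto.
    + intros [k [Hk H]]. destruct (Nat.eq_dec k m) as [->|]; auto.
      right; exists k; split; auto; lia.
Qed.

Lemma occurs_false x w m : occurs x w m = false <-> forall k, (k < m)%nat -> x k <> w.
Proof.
  split.
  - intros H k Hk E. assert (occurs x w m = true) by (apply occurs_true; eauto). congruence.
  - intros H. destruct (occurs x w m) eqn:E; auto.
    apply occurs_true in E as [k [Hk E]]. exfalso; eapply H; eauto.
Qed.

Lemma find_index_spec x w m : occurs x w m = true ->
  (find_index x w m < m)%nat /\ x (find_index x w m) = w.
Proof.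
  induction m as [|m IH]; simpl; [discriminate|].
  destruct (Nat.eqb_spec (x m) w); simpl; auto.
  intros H. destruct (IH H). split; auto.
Qed.

Lemma find_index_inj x m k : (k < m)%nat ->
  (forall i j, (i < m)%nat -> (j < m)%nat -> x i = x j -> i = j) ->
  find_index x (x k) m = k.
Proof.
  intros Hk Hinj.
  assert (H : occurs x (x k) m = true) by (apply occurs_true; eauto).
  destruct (find_index_spec _ _ _ H). apply Hinj; auto.
Qed.

Definition shift (x : nat -> nat) (n : nat) : nat -> nat := fun k => x (n + k)%nat.

Lemma rsum_mask (g : nat -> R) (x : nat -> nat) N m :
  (forall k, (k < m)%nat -> (x k < N)%nat) ->
  (forall i j, (i < m)%nat -> (j < m)%nat -> x i = x j -> i = j) ->
  rsum g N = rsum (fun v => if occurs x v m then 0 else g v) N + rsum (fun k => g (x k)) m.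
Proof.
  induction m as [|m IH]; intros Hr Hi.
  - simpl. rewrite Rplus_0_r. reflexivity.
  - rewrite IH by (intros; try apply Hr; try apply Hi; lia).
    rewrite (rsum_change (fun v => if occurs x v m then 0 else g v)
                         (fun v => if occurs x v (S m) then 0 else g v) N (x m)).
    + simpl. rewrite Nat.eqb_refl. simpl.
      assert (Hm : occurs x (x m) m = false).
      { apply occurs_false. intros k Hk E. assert (k = m) by (apply Hi; lia). lia. }
      rewrite Hm. lra.
    + apply Hr; lia.
    + intros v Hv Hne. simpl. destruct (Nat.eqb_spec (x m) v); [congruence|]. reflexivity.
Qed.

Lemma ncount_ge1 P N a : (a < N)%nat -> P a = true -> (1 <= ncount P N)%nat.
Proof.
  induction N as [|N IH]; intros Ha Hp; [lia|]. simpl.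
  destruct (Nat.eq_dec a N) as [->|]; [rewrite Hp; lia|]. specialize (IH ltac:(lia) Hp). lia.
Qed.

Lemma ncount_ge2 P N a b : (a < N)%nat -> (b < N)%nat -> a <> b ->
  P a = true -> P b = true -> (2 <= ncount P N)%nat.
Proof.
  induction N as [|N IH]; intros Ha Hb Hab Pa Pb; [lia|]. simpl.
  destruct (Nat.eq_dec a N) as [->|]; [rewrite Pa; pose proof (ncount_ge1 P N b ltac:(lia) Pb); lia|].
  destruct (Nat.eq_dec b N) as [->|]; [rewrite Pb; pose proof (ncount_ge1 P N a ltac:(lia) Pa); lia|].
  specialize (IH ltac:(lia) ltac:(lia) Hab Pa Pb). lia.
Qed.

Section Trees.
Context {Z : list point} {zBS : point}.

Definition inflow (T : FQST Z zBS) (w : nat) : R :=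
  rsum (fun u => if Nat.eqb (nxt T u) w then fl T u else 0) (sink T).

Lemma nxt_le (T : FQST Z zBS) u : (u < sink T)%nat -> (nxt T u <= sink T)%nat.
Proof. intros; apply nxt_range; auto. Qed.

Lemma indeg1_pred_unique (T : FQST Z zBS) v a b :
  indeg T v = 1%nat -> (a < sink T)%nat -> (b < sink T)%nat ->
  nxt T a = v -> nxt T b = v -> a = b.
Proof.
  intros H Ha Hb Ea Eb. destruct (Nat.eq_dec a b) as [|Hab]; auto. exfalso.
  pose proof (ncount_ge2 (fun u => Nat.eqb (nxt T u) v) (sink T) a b Ha Hb Hab
    ltac:(apply Nat.eqb_eq; auto) ltac:(apply Nat.eqb_eq; auto)).
  unfold indeg in H. lia.
Qed.

(* Out-edges reach the sink, so two nodes cannot point at each other. *)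
Lemma no_2cycle (T : FQST Z zBS) a b :
  (a < sink T)%nat -> (b < sink T)%nat -> nxt T a = b -> nxt T b = a -> False.
Proof.
  intros Ha Hb E1 E2. destruct (reach_sink Z zBS T a Ha) as [k Hk].
  assert (Hab : forall j, Nat.iter j (nxt T) a = a \/ Nat.iter j (nxt T) a = b).
  { induction j as [|j IH]; simpl; auto. destruct IH as [-> | ->]; auto. }
  destruct (Hab k) as [E|E]; rewrite E in Hk; unfold sink in *; lia.
Qed.

Lemma node_pos_inj (T : FQST Z zBS) a b : NoDup Z -> ~ In zBS Z ->
  (a <= sink T)%nat -> (b <= sink T)%nat -> node_pos T a = node_pos T b -> a = b.
Proof.
  intros HZ HB Ha Hb. unfold node_pos, sink in *.
  assert (Hsrc : forall i, (i < length Z)%nat -> In (nth i Z (0,0)) Z) by (intros; apply nth_In; auto).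
  destruct (Nat.ltb_spec a (length Z)), (Nat.ltb_spec b (length Z)).
  - intros E. eapply NoDup_nth; eauto.
  - destruct (Nat.ltb_spec b (length Z + nS T)); intros E; exfalso.
    + apply (spt_notZ Z zBS T (b - length Z)); [lia|]. rewrite <- E. auto.
    + apply HB. rewrite <- E. auto.
  - destruct (Nat.ltb_spec a (length Z + nS T)); intros E; exfalso.
    + apply (spt_notZ Z zBS T (a - length Z)); [lia|]. rewrite E. auto.
    + apply HB. rewrite E. auto.
  - destruct (Nat.ltb_spec a (length Z + nS T)), (Nat.ltb_spec b (length Z + nS T)); intros E.
    + apply spt_inj in E; lia.
    + exfalso. apply (spt_notBS Z zBS T (a - length Z)); [lia|auto].
    + exfalso. apply (spt_notBS Z zBS T (b - length Z)); [lia|auto].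
    + lia.
Qed.

End Trees.

Record chain {Z : list point} {zBS : point}
    (T : FQST Z zBS) (p : nat) (x : nat -> nat) (f : R) : Prop := {
  chain_node : forall i, (i <= p + 1)%nat -> (x i <= sink T)%nat;
  chain_inj : forall i j, (i <= p + 1)%nat -> (j <= p + 1)%nat -> x i = x j -> i = j;
  chain_step : forall i, (i <= p)%nat -> (x i < sink T)%nat /\ nxt T (x i) = x (S i);
  chain_steiner : forall i, (1 <= i <= p)%nat -> (length Z <= x i)%nat;
  chain_pred : forall i, (1 <= i <= p)%nat ->
    forall u, (u < sink T)%nat -> nxt T u = x i -> u = x (i - 1)%nat;
  chain_flow : forall i, (i <= p)%nat -> fl T (x i) = f
}.

Arguments chain_node {Z zBS T p x f}. Arguments chain_inj {Z zBS T p x f}.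
Arguments chain_step {Z zBS T p x f}. Arguments chain_steiner {Z zBS T p x f}.
Arguments chain_pred {Z zBS T p x f}. Arguments chain_flow {Z zBS T p x f}.

Section Chains.
Context {Z : list point} {zBS : point}.

Lemma chain_flow_pos (T : FQST Z zBS) p x f : chain T p x f -> 0 < f.
Proof.
  intros Hf. rewrite <- (chain_flow Hf 0) by lia.
  apply fl_pos. apply (chain_step Hf 0); lia.
Qed.

Definition edge_cost (T : FQST Z zBS) (v : nat) : R :=
  fl T v * dist2 (node_pos T v) (node_pos T (nxt T v)).

Definition off_chain_cost (T : FQST Z zBS) (p : nat) (x : nat -> nat) : R :=
  rsum (fun v => if occurs x v (S p) then 0 else edge_cost T v) (sink T).

Lemma cost_split (T : FQST Z zBS) p x f : chain T p x f ->
  cost T = off_chain_cost T p x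
           + f * rsum (fun k => dist2 (node_pos T (x k)) (node_pos T (x (S k)))) (S p).
Proof.
  intros Hf. unfold cost, off_chain_cost. fold (edge_cost T).
  rewrite (rsum_mask (edge_cost T) x (sink T) (S p)).
  - f_equal. rewrite <- rsum_scal. apply rsum_ext. intros k Hk.
    unfold edge_cost. rewrite (chain_flow Hf k), (proj2 (chain_step Hf k ltac:(lia))) by lia.
    reflexivity.
  - intros k Hk. apply (chain_step Hf); lia.
  - intros i j Hi Hj E. apply (chain_inj Hf); auto; lia.
Qed.

End Chains.

(** * Evenly spaced fresh positions on a segment *)

Section Spacing.
Context {Z : list point} {zBS : point}.

Definition fresh_positions (T : FQST Z zBS) (Y : nat -> point) (a b : nat) : Prop :=
  (forall k, (a <= k <= b)%nat ->
     ~ In (Y k) Z /\ Y k <> zBS /\ forall i, (i < nS T)%nat -> Y k <> spt T i) /\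
  (forall j k, (a <= j <= b)%nat -> (a <= k <= b)%nat -> Y j = Y k -> j = k).

Definition spacing (m : nat) (e : R) (k : nat) : R :=
  if Nat.eqb k 0 then 0 else if Nat.eqb k m then 1 else INR k / INR m + e.

Lemma spacing_energy m e : (1 <= m)%nat ->
  rsum (fun k => (spacing m e k - spacing m e (S k)) ^ 2) m <= 1 / INR m + 2 * e ^ 2.
Proof.
  intros Hm. destruct m as [|[|j]]; [lia| |].
  - unfold spacing. simpl. pose proof (pow2_ge_0 e). lra.
  - rewrite rsum_S, rsum_shift.
    assert (HM : 0 < INR (S (S j))) by (apply lt_0_INR; lia).
    rewrite (rsum_ext _ (fun _ => (1 / INR (S (S j))) ^ 2)).
    2:{ intros i Hi. unfold spacing. simpl Nat.eqb.
        destruct (Nat.eqb_spec i (S j)), (Nat.eqb_spec (S i) (S j)), (Nat.eqb_spec i j); try lia.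
        rewrite (S_INR (S i)). field. lra. }
    rewrite rsum_const. unfold spacing. simpl Nat.eqb.
    destruct (Nat.eqb_spec j (S j)); [lia|]. rewrite Nat.eqb_refl.
    replace (INR (S (S j))) with (INR j + 2) in * by (rewrite !S_INR; ring).
    replace (INR (S j)) with (INR j + 1) by (rewrite S_INR; ring).
    rewrite INR_1. right. field. lra.
Qed.

Lemma spacing_path_cost u v m e : (1 <= m)%nat ->
  rsum (fun k => dist2 (seg_point u v (spacing m e k)) (seg_point u v (spacing m e (S k)))) m
  <= dist2 u v * (1 / INR m + 2 * e ^ 2).
Proof.
  intros Hm. rewrite (rsum_ext _ (fun k => dist2 u v * (spacing m e k - spacing m e (S k)) ^ 2)).
  2:{ intros; rewrite dist2_seg_point; ring. }
  rewrite rsum_scal. apply Rmult_le_compat_l; [apply dist2_nonneg|]. apply spacing_energy; auto.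
Qed.

Lemma spacing_fresh (T : FQST Z zBS) (u v : point) m d : u <> v -> 0 < d ->
  exists e, 0 < e < d /\ fresh_positions T (fun k => seg_point u v (spacing m e k)) 1 (m - 1).
Proof.
  intros Huv Hd.
  set (F := Z ++ zBS :: map (spt T) (seq 0 (nS T))).
  set (B := flat_map (fun z => map (fun k => seg_param u v z - INR k / INR m) (seq 1 (m - 1))) F).
  destruct (avoid_list B d Hd) as [e [He HB]].
  exists e. split; auto.
  assert (Hsp : forall k, (1 <= k <= m - 1)%nat -> spacing m e k = INR k / INR m + e).
  { intros k Hk. unfold spacing. destruct (Nat.eqb_spec k 0), (Nat.eqb_spec k m); auto; lia. }
  assert (Hbad : forall k z, (1 <= k <= m - 1)%nat -> In z F -> seg_point u v (spacing m e k) <> z).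
  { intros k z Hk Hz E. apply (HB (seg_param u v z - INR k / INR m)).
    - apply in_flat_map. exists z. split; auto. apply in_map_iff. exists k. split; auto.
      apply in_seq. lia.
    - rewrite <- E, seg_param_point, Hsp by auto. ring. }
  split.
  - intros k Hk. repeat split.
    + intros Hin. apply (Hbad k (seg_point u v (spacing m e k)) Hk); auto. apply in_or_app; auto.
    + intros E. apply (Hbad k zBS Hk); auto. apply in_or_app; right; left; auto.
    + intros i Hi E. apply (Hbad k (spt T i) Hk); auto. apply in_or_app; right; right.
      apply in_map. apply in_seq. lia.
  - intros j k Hj Hk E. apply seg_point_inj in E; auto. rewrite !Hsp in E by auto.
    assert (0 < INR m) by (apply lt_0_INR; lia).
    apply INR_eq. apply (Rmult_eq_reg_r (/ INR m)); [|apply Rinv_neq_0_compat; lra].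
    unfold Rdiv in E. lra.
Qed.

End Spacing.

Section Placement.
Context {Z : list point} {zBS : point}.
Variables (T : FQST Z zBS) (Y : nat -> point) (a b : nat).
Hypothesis HY : fresh_positions T Y a b.

(* A Steiner point of a modified tree either keeps the position of Steiner
   point j of T (inl j) or takes the fresh position Y k (inr k). *)
Definition place (s : nat + nat) : point :=
  match s with inl j => spt T j | inr k => Y k end.

Definition valid_source (s : nat + nat) : Prop :=
  match s with inl j => (j < nS T)%nat | inr k => (a <= k <= b)%nat end.

Lemma place_inj s s' : valid_source s -> valid_source s' -> place s = place s' -> s = s'.
Proof.
  destruct HY as [Hfresh Hinj].
  destruct s as [j|k], s' as [j'|k']; simpl; intros Hs Hs' E.
  - f_equal. apply (spt_inj Z zBS T); auto.
  - exfalso. apply (proj2 (proj2 (Hfresh k' Hs')) j Hs). auto.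
  - exfalso. apply (proj2 (proj2 (Hfresh k Hs)) j' Hs'). auto.
  - f_equal. auto.
Qed.

Lemma place_notZ s : valid_source s -> ~ In (place s) Z.
Proof. destruct s; simpl; intros; [apply spt_notZ|apply HY]; auto. Qed.

Lemma place_notBS s : valid_source s -> place s <> zBS.
Proof. destruct s; simpl; intros; [apply spt_notBS|apply HY]; auto. Qed.

End Placement.

(** * Subdivision: inserting one more Steiner point into a chain *)

(* Node indices of the subdivided tree: the old sink index N becomes the new
   Steiner point and the sink moves to N+1. *)
Definition lift_sink (N w : nat) : nat := if Nat.eqb w N then S N else w.

Lemma lift_sink_lt N w : (w < N)%nat -> lift_sink N w = w.
Proof. intros. unfold lift_sink. destruct (Nat.eqb_spec w N); lia. Qed.
Lemma lift_sink_N N : lift_sink N N = S N.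
Proof. unfold lift_sink. rewrite Nat.eqb_refl. auto. Qed.
Lemma lift_sink_ne N w : (w <= N)%nat -> lift_sink N w <> N.
Proof. intros. unfold lift_sink. destruct (Nat.eqb_spec w N); lia. Qed.
Lemma lift_sink_le N w : (w <= N)%nat -> (lift_sink N w <= S N)%nat.
Proof. unfold lift_sink. intros. destruct (Nat.eqb_spec w N); lia. Qed.
Lemma eqb_lift_sink N a b : (a <= N)%nat -> (b <= N)%nat ->
  Nat.eqb (lift_sink N a) (lift_sink N b) = Nat.eqb a b.
Proof.
  intros. destruct (Nat.eqb_spec a b) as [->|Hab]; [apply Nat.eqb_refl|].
  apply Nat.eqb_neq. unfold lift_sink. destruct (Nat.eqb_spec a N), (Nat.eqb_spec b N); lia.
Qed.

Section Subdivision.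
Context {Z : list point} {zBS : point}.
Variables (T : FQST Z zBS) (p : nat) (x : nat -> nat) (f : R).
Hypothesis Hf : chain T p x f.

(* Edges: x p -> new point N -> x (p+1); all other edges are kept. *)
Definition subdiv_nxt (w : nat) : nat :=
  if Nat.eqb w (x p) then sink T
  else if Nat.eqb w (sink T) then lift_sink (sink T) (x (S p))
  else lift_sink (sink T) (nxt T w).

Definition subdiv_fl (w : nat) : R := if Nat.eqb w (sink T) then f else fl T w.

(* Steiner points: x 1..x p are moved to Y 1..Y p, the new one sits at Y (p+1). *)
Definition subdiv_src (i : nat) : nat + nat :=
  if Nat.eqb i (nS T) then inr (S p)
  else if occurs (shift x 1) (length Z + i) p
       then inr (S (find_index (shift x 1) (length Z + i) p)) else inl i.

Definition subdiv_spt (Y : nat -> point) (i : nat) : point := place T Y (subdiv_src i).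

Lemma occurs_interior w : occurs (shift x 1) w p = true -> (length Z <= w < sink T)%nat.
Proof.
  intros H. apply occurs_true in H as [k [Hk <-]]. unfold shift.
  split; [apply (chain_steiner Hf)|apply (chain_step Hf)]; lia.
Qed.

Lemma occurs_interior_x k : (k <= p + 1)%nat ->
  occurs (shift x 1) (x k) p = true <-> (1 <= k <= p)%nat.
Proof.
  intros Hk. rewrite occurs_true. unfold shift. split.
  - intros [j [Hj E]]. apply (chain_inj Hf) in E; lia.
  - intros Hk'. exists (k - 1)%nat. split; [lia|]. f_equal; lia.
Qed.

Lemma find_interior_x k : (1 <= k <= p)%nat -> find_index (shift x 1) (x k) p = (k - 1)%nat.
Proof.
  intros Hk. replace (x k) with (shift x 1 (k - 1)%nat) by (unfold shift; f_equal; lia).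
  apply find_index_inj; [lia|]. intros i j Hi Hj E. apply (chain_inj Hf) in E; lia.
Qed.

Lemma subdiv_nxt_other u : u <> x p -> (u < sink T)%nat ->
  subdiv_nxt u = lift_sink (sink T) (nxt T u).
Proof.
  intros H1 H2. unfold subdiv_nxt.
  destruct (Nat.eqb_spec u (x p)), (Nat.eqb_spec u (sink T)); auto; lia.
Qed.

Lemma subdiv_nxt_last : subdiv_nxt (x p) = sink T.
Proof. unfold subdiv_nxt. rewrite Nat.eqb_refl. reflexivity. Qed.

Lemma subdiv_nxt_new : subdiv_nxt (sink T) = lift_sink (sink T) (x (S p)).
Proof.
  unfold subdiv_nxt. pose proof (proj1 (chain_step Hf p ltac:(lia))).
  destruct (Nat.eqb_spec (sink T) (x p)); [lia|]. rewrite Nat.eqb_refl. reflexivity.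
Qed.

Lemma subdiv_fl_old u : (u < sink T)%nat -> subdiv_fl u = fl T u.
Proof. intros. unfold subdiv_fl. destruct (Nat.eqb_spec u (sink T)); [lia|auto]. Qed.

Lemma subdiv_inflow_old w : (w <= sink T)%nat ->
  rsum (fun u => if Nat.eqb (subdiv_nxt u) (lift_sink (sink T) w) then subdiv_fl u else 0)
       (S (sink T))
  = inflow T w.
Proof.
  intros Hw. destruct (chain_step Hf p ltac:(lia)) as [Hp1 Hp2].
  pose proof (chain_node Hf (S p) ltac:(lia)) as HxSp.
  rewrite rsum_S, subdiv_nxt_new. unfold subdiv_fl at 2. rewrite Nat.eqb_refl.
  rewrite eqb_lift_sink by auto. unfold inflow.
  rewrite (rsum_change _ (fun u => if Nat.eqb (nxt T u) w then fl T u else 0) (sink T) (x p) Hp1).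
  - rewrite subdiv_nxt_last. destruct (Nat.eqb_spec (sink T) (lift_sink (sink T) w)).
    { exfalso. apply (lift_sink_ne (sink T) w); auto. }
    rewrite Hp2, (chain_flow Hf) by lia. destruct (Nat.eqb_spec (x (S p)) w); lra.
  - intros u Hu Hne. rewrite subdiv_nxt_other, subdiv_fl_old by auto.
    rewrite eqb_lift_sink by (auto; apply nxt_le; auto). reflexivity.
Qed.

Lemma subdiv_inflow_new :
  rsum (fun u => if Nat.eqb (subdiv_nxt u) (sink T) then subdiv_fl u else 0) (S (sink T)) = f.
Proof.
  destruct (chain_step Hf p ltac:(lia)) as [Hp1 Hp2].
  rewrite rsum_S, subdiv_nxt_new.
  destruct (Nat.eqb_spec (lift_sink (sink T) (x (S p))) (sink T)) as [E|].
  { exfalso. revert E. apply lift_sink_ne, (chain_node Hf); lia. }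
  rewrite (rsum_change _ (fun _ => 0) (sink T) (x p) Hp1).
  - rewrite rsum_zero, subdiv_nxt_last, Nat.eqb_refl, subdiv_fl_old, (chain_flow Hf) by lia. lra.
  - intros u Hu Hne. rewrite subdiv_nxt_other by auto.
    destruct (Nat.eqb_spec (lift_sink (sink T) (nxt T u)) (sink T)) as [E|]; auto.
    exfalso. revert E. apply lift_sink_ne, nxt_le; auto.
Qed.

Lemma subdiv_reach k v : (v <= sink T)%nat -> Nat.iter k (nxt T) v = sink T ->
  exists k', Nat.iter k' subdiv_nxt (lift_sink (sink T) v) = S (sink T).
Proof.
  destruct (chain_step Hf p ltac:(lia)) as [_ Hp2].
  revert v; induction k as [|k IH]; intros v Hv Hk.
  - simpl in Hk. subst. exists 0%nat. apply lift_sink_N.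
  - destruct (Nat.eq_dec v (sink T)) as [->|]. { exists 0%nat. apply lift_sink_N. }
    rewrite Nat.iter_succ_r in Hk.
    destruct (IH (nxt T v) ltac:(apply nxt_le; lia) Hk) as [k' Hk'].
    rewrite lift_sink_lt by lia.
    destruct (Nat.eq_dec v (x p)) as [->|].
    + exists (S (S k')). rewrite !Nat.iter_succ_r, subdiv_nxt_last, subdiv_nxt_new, <- Hp2. auto.
    + exists (S k'). rewrite Nat.iter_succ_r, subdiv_nxt_other by lia. auto.
Qed.

Lemma subdiv_src_valid i : (i < S (nS T))%nat -> valid_source T 1 (S p) (subdiv_src i).
Proof.
  intros Hi. unfold subdiv_src. destruct (Nat.eqb_spec i (nS T)); simpl; [lia|].
  destruct (occurs (shift x 1) (length Z + i) p) eqn:E; simpl; [|lia].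
  destruct (find_index_spec _ _ _ E). lia.
Qed.

Lemma subdiv_src_inj i j : (i < S (nS T))%nat -> (j < S (nS T))%nat ->
  subdiv_src i = subdiv_src j -> i = j.
Proof.
  intros Hi Hj. unfold subdiv_src.
  destruct (Nat.eqb_spec i (nS T)), (Nat.eqb_spec j (nS T)); try lia;
  destruct (occurs (shift x 1) (length Z + i) p) eqn:Ei;
  destruct (occurs (shift x 1) (length Z + j) p) eqn:Ej; intros E; try discriminate;
  injection E as E;
  repeat match goal with H : occurs _ _ _ = true |- _ => destruct (find_index_spec _ _ _ H); clear H end;
  try lia.
  assert (length Z + i = length Z + j)%nat by congruence. lia.
Qed.

Lemma subdiv_build Y : fresh_positions T Y 1 (S p) ->
  exists T' : FQST Z zBS, nS T' = S (nS T) /\ (forall i, spt T' i = subdiv_spt Y i) /\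
    (forall w, nxt T' w = subdiv_nxt w) /\ (forall w, fl T' w = subdiv_fl w).
Proof.
  intros HY.
  pose proof (chain_node Hf (S p) ltac:(lia)) as HxSp.
  assert (EN : forall k, (length Z + S k = S (length Z + k))%nat) by (intros; lia).
  unshelve eexists (Build_FQST Z zBS (S (nS T)) (subdiv_spt Y) subdiv_nxt subdiv_fl
                      _ _ _ _ _ _ _ _ _);
    [ | | | | | | | | | repeat split; reflexivity].
  - intros i j Hi Hj E. apply subdiv_src_inj; auto.
    apply (place_inj T Y 1 (S p)); auto; apply subdiv_src_valid; auto.
  - intros i Hi. apply (place_notZ T Y 1 (S p)); auto. apply subdiv_src_valid; auto.
  - intros i Hi. apply (place_notBS T Y 1 (S p)); auto. apply subdiv_src_valid; auto.
  - intros v Hv. rewrite EN in *. fold (sink T) in *.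
    destruct (Nat.eq_dec v (x p)) as [->|]; [rewrite subdiv_nxt_last; lia|].
    destruct (Nat.eq_dec v (sink T)) as [->|]; [rewrite subdiv_nxt_new; apply lift_sink_le; auto|].
    rewrite subdiv_nxt_other by lia. apply lift_sink_le, nxt_le. lia.
  - intros v Hv. rewrite EN in *. fold (sink T) in *.
    destruct (Nat.eq_dec v (sink T)) as [->|].
    + assert (Hk : exists k, Nat.iter k (nxt T) (x (S p)) = sink T).
      { destruct (Nat.eq_dec (x (S p)) (sink T)); [exists 0%nat; auto|].
        apply reach_sink. unfold sink in *. lia. }
      destruct Hk as [k Hk]. destruct (subdiv_reach k (x (S p)) HxSp Hk) as [k' Hk'].
      exists (S k'). rewrite Nat.iter_succ_r, subdiv_nxt_new. auto.
    + destruct (reach_sink Z zBS T v ltac:(unfold sink in *; lia)) as [k Hk].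
      destruct (subdiv_reach k v ltac:(lia) Hk) as [k' Hk'].
      rewrite lift_sink_lt in Hk' by lia. eauto.
  - intros v Hv. rewrite EN in *. fold (sink T) in *. unfold subdiv_fl.
    destruct (Nat.eqb_spec v (sink T)); [apply (chain_flow_pos T p x f Hf)|].
    apply fl_pos. unfold sink in *; lia.
  - intros v Hv. rewrite EN. fold (sink T).
    pose proof (subdiv_inflow_old v ltac:(unfold sink; lia)) as Hi.
    rewrite lift_sink_lt in Hi by (unfold sink; lia). rewrite Hi.
    rewrite subdiv_fl_old by (unfold sink; lia). apply cons_source; auto.
  - intros v Hv. rewrite EN in *. fold (sink T) in *.
    destruct (Nat.eq_dec v (sink T)) as [->|].
    + rewrite subdiv_inflow_new. unfold subdiv_fl. rewrite Nat.eqb_refl. auto.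
    + pose proof (subdiv_inflow_old v ltac:(lia)) as Hi.
      rewrite lift_sink_lt in Hi by lia. rewrite Hi, subdiv_fl_old by lia.
      apply cons_steiner. unfold sink in *; lia.
  - rewrite EN. fold (sink T).
    pose proof (subdiv_inflow_old (sink T) ltac:(lia)) as Hi.
    rewrite lift_sink_N in Hi. rewrite Hi. apply cons_sink.
Qed.

Definition subdiv_pos (Y : nat -> point) (w : nat) : point :=
  if occurs (shift x 1) w p then Y (S (find_index (shift x 1) w p)) else node_pos T w.

Section Positions.
Variables (Y : nat -> point) (T' : FQST Z zBS).
Hypotheses (HnS : nS T' = S (nS T)) (Hspt : forall i, spt T' i = subdiv_spt Y i).

Lemma subdiv_node_pos w : (w <= sink T)%nat -> node_pos T' (lift_sink (sink T) w) = subdiv_pos Y w.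
Proof.
  intros Hw. unfold subdiv_pos.
  destruct (Nat.eq_dec w (sink T)) as [->|].
  - rewrite lift_sink_N. destruct (occurs (shift x 1) (sink T) p) eqn:E.
    { apply occurs_interior in E. lia. }
    unfold node_pos, sink. rewrite HnS.
    destruct (Nat.ltb_spec (S (length Z + nS T)) (length Z)),
      (Nat.ltb_spec (S (length Z + nS T)) (length Z + S (nS T))),
      (Nat.ltb_spec (length Z + nS T) (length Z)),
      (Nat.ltb_spec (length Z + nS T) (length Z + nS T)); try lia. reflexivity.
  - rewrite lift_sink_lt by lia. unfold node_pos, sink in *. rewrite HnS.
    destruct (Nat.ltb_spec w (length Z)).
    + destruct (occurs (shift x 1) w p) eqn:E; [|reflexivity].
      apply occurs_interior in E. lia.
    + destruct (Nat.ltb_spec w (length Z + S (nS T))), (Nat.ltb_spec w (length Z + nS T)); try lia.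
      rewrite Hspt. unfold subdiv_spt, subdiv_src.
      destruct (Nat.eqb_spec (w - length Z) (nS T)); [lia|].
      replace (length Z + (w - length Z))%nat with w by lia.
      destruct (occurs (shift x 1) w p); reflexivity.
Qed.

Lemma subdiv_node_pos_new : node_pos T' (sink T) = Y (S p).
Proof.
  unfold node_pos, sink. rewrite HnS.
  destruct (Nat.ltb_spec (length Z + nS T) (length Z)); [destruct (nS T); lia|].
  destruct (Nat.ltb_spec (length Z + nS T) (length Z + S (nS T))); [|lia].
  rewrite Hspt. unfold subdiv_spt, subdiv_src.
  replace (length Z + nS T - length Z)%nat with (nS T) by lia.
  rewrite Nat.eqb_refl. reflexivity.
Qed.

Lemma subdiv_pos_chain k : Y 0%nat = node_pos T (x 0%nat) -> (k <= p + 1)%nat ->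
  subdiv_pos Y (x k) = if Nat.eqb k (S p) then node_pos T (x k) else Y k.
Proof.
  intros HY0 Hk. unfold subdiv_pos.
  destruct (occurs (shift x 1) (x k) p) eqn:E.
  - apply (occurs_interior_x k Hk) in E. rewrite find_interior_x by auto.
    destruct (Nat.eqb_spec k (S p)); [lia|]. f_equal; lia.
  - assert (~ (1 <= k <= p)%nat) by (rewrite <- occurs_interior_x; congruence).
    destruct (Nat.eqb_spec k (S p)); auto. replace k with 0%nat by lia. auto.
Qed.

Lemma subdiv_edge_cost_off v : (v < sink T)%nat -> occurs x v (S p) = false ->
  fl T v * dist2 (subdiv_pos Y v) (node_pos T' (subdiv_nxt v)) = edge_cost T v.
Proof.
  intros Hv Hin. rewrite occurs_false in Hin.
  assert (Hv1 : occurs (shift x 1) v p = false).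
  { apply occurs_false. intros k Hk E. apply (Hin (S k)); [lia|auto]. }
  assert (Hv2 : occurs (shift x 1) (nxt T v) p = false).
  { apply occurs_false. intros k Hk E. unfold shift in E. symmetry in E.
    apply (chain_pred Hf) in E; try lia. apply (Hin k); [lia|]. rewrite E. f_equal; lia. }
  rewrite subdiv_nxt_other; [| intros E; apply (Hin p); [lia|auto] | auto].
  rewrite subdiv_node_pos by (apply nxt_le; auto).
  unfold subdiv_pos, edge_cost. rewrite Hv1, Hv2. reflexivity.
Qed.

Lemma subdiv_cost : Y 0%nat = node_pos T (x 0%nat) -> Y (S (S p)) = node_pos T (x (S p)) ->
  (forall w, nxt T' w = subdiv_nxt w) -> (forall w, fl T' w = subdiv_fl w) ->
  cost T' = off_chain_cost T p x + f * rsum (fun k => dist2 (Y k) (Y (S k))) (S (S p)).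
Proof.
  intros HY0 HY1 Hnxt Hfl.
  unfold cost. replace (sink T') with (S (sink T)) by (unfold sink; rewrite HnS; lia).
  rewrite rsum_S.
  rewrite (rsum_ext _ (fun v => fl T v * dist2 (subdiv_pos Y v) (node_pos T' (subdiv_nxt v)))).
  2:{ intros v Hv. rewrite Hfl, Hnxt, subdiv_fl_old, <- subdiv_node_pos, lift_sink_lt by lia.
      reflexivity. }
  rewrite (rsum_mask _ x (sink T) (S p)).
  2:{ intros k Hk. apply (chain_step Hf); lia. }
  2:{ intros i j Hi Hj E. apply (chain_inj Hf); auto; lia. }
  unfold off_chain_cost. rewrite (rsum_S _ (S p)), Rmult_plus_distr_l, <- rsum_scal.
  rewrite (rsum_ext (fun v => if occurs x v (S p) then 0 else _)
                    (fun v => if occurs x v (S p) then 0 else edge_cost T v)).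
  2:{ intros v Hv. destruct (occurs x v (S p)) eqn:E; auto. apply subdiv_edge_cost_off; auto. }
  rewrite (rsum_ext (fun k => fl T (x k) * _) (fun k => f * dist2 (Y k) (Y (S k)))).
  2:{ intros k Hk. rewrite (chain_flow Hf), subdiv_pos_chain by (auto; lia).
      destruct (Nat.eqb_spec k (S p)); [lia|]. f_equal. f_equal.
      destruct (Nat.eq_dec k p) as [->|].
      - rewrite subdiv_nxt_last, subdiv_node_pos_new. reflexivity.
      - rewrite subdiv_nxt_other by (try apply (chain_step Hf); try lia;
          intros E; apply (chain_inj Hf) in E; lia).
        rewrite (proj2 (chain_step Hf k ltac:(lia))), subdiv_node_pos by (apply (chain_node Hf); lia).
        rewrite subdiv_pos_chain by (auto; lia).
        destruct (Nat.eqb_spec (S k) (S p)); [lia|]. reflexivity. }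
  rewrite Hfl, Hnxt. unfold subdiv_fl. rewrite Nat.eqb_refl.
  rewrite subdiv_nxt_new, subdiv_node_pos by (apply (chain_node Hf); lia).
  rewrite subdiv_pos_chain, Nat.eqb_refl, subdiv_node_pos_new, <- HY1 by (auto; lia). lra.
Qed.

End Positions.
End Subdivision.

(** * Contraction: removing the first Steiner point of a chain *)

(* Node indices after deleting node r: new index i is old index old_index r i. *)
Definition old_index (r i : nat) : nat := if Nat.ltb i r then i else S i.
Definition new_index (r w : nat) : nat := if Nat.ltb w r then w else pred w.

Lemma old_index_ne r i : old_index r i <> r.
Proof. unfold old_index. destruct (Nat.ltb_spec i r); lia. Qed.
Lemma new_old_index r i : new_index r (old_index r i) = i.
Proof.
  unfold old_index, new_index.
  destruct (Nat.ltb_spec i r); [destruct (Nat.ltb_spec i r)|destruct (Nat.ltb_spec (S i) r)]; lia.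
Qed.
Lemma old_new_index r w : w <> r -> old_index r (new_index r w) = w.
Proof.
  unfold old_index, new_index. intros.
  destruct (Nat.ltb_spec w r); [destruct (Nat.ltb_spec w r)|destruct (Nat.ltb_spec (pred w) r)]; lia.
Qed.
Lemma eqb_new_index r a b : a <> r -> b <> r -> Nat.eqb (new_index r a) (new_index r b) = Nat.eqb a b.
Proof.
  intros Ha Hb. destruct (Nat.eqb_spec a b) as [->|Hab]; [apply Nat.eqb_refl|].
  apply Nat.eqb_neq. intros E. apply Hab.
  rewrite <- (old_new_index r a Ha), <- (old_new_index r b Hb), E. reflexivity.
Qed.
Lemma new_index_lt r w : (w < r)%nat -> new_index r w = w.
Proof. unfold new_index. intros. destruct (Nat.ltb_spec w r); lia. Qed.
Lemma new_index_gt r w : (r < w)%nat -> new_index r w = pred w.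
Proof. unfold new_index. intros. destruct (Nat.ltb_spec w r); lia. Qed.
Lemma new_index_le r w N : (r < N)%nat -> (w <= N)%nat -> w <> r -> (new_index r w <= pred N)%nat.
Proof. unfold new_index. intros. destruct (Nat.ltb_spec w r); lia. Qed.
Lemma old_index_lt r i N : (r < N)%nat -> (i < pred N)%nat -> (old_index r i < N)%nat.
Proof. unfold old_index. intros. destruct (Nat.ltb_spec i r); lia. Qed.
Lemma old_index_ge r i n : (n <= r)%nat -> (n <= i)%nat -> (n <= old_index r i)%nat.
Proof. unfold old_index. intros. destruct (Nat.ltb_spec i r); lia. Qed.
Lemma old_index_small r i : (i < r)%nat -> old_index r i = i.
Proof. unfold old_index. intros. destruct (Nat.ltb_spec i r); lia. Qed.
Lemma old_index_cases r i : old_index r i = i \/ old_index r i = S i.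
Proof. unfold old_index. destruct (Nat.ltb i r); auto. Qed.

Section Contraction.
Context {Z : list point} {zBS : point}.
Variables (T : FQST Z zBS) (p : nat) (x : nat -> nat) (f : R).
Hypotheses (Hf : chain T p x f) (Hp : (1 <= p)%nat).

Definition bypass_nxt (w : nat) : nat := if Nat.eqb w (x 0%nat) then x 2%nat else nxt T w.

Definition contract_nxt (i : nat) : nat :=
  new_index (x 1%nat) (bypass_nxt (old_index (x 1%nat) i)).
Definition contract_fl (i : nat) : R := fl T (old_index (x 1%nat) i).

(* Steiner points: x 2..x p are moved to Y 1..Y (p-1), the others are kept. *)
Definition contract_src (j : nat) : nat + nat :=
  let w := old_index (x 1%nat) (length Z + j) in
  if occurs (shift x 2) w (p - 1) then inr (S (find_index (shift x 2) w (p - 1)))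
  else inl (w - length Z)%nat.
Definition contract_spt (Y : nat -> point) (j : nat) : point := place T Y (contract_src j).

Lemma first_steiner : (length Z <= x 1%nat < sink T)%nat /\ x 0%nat <> x 1%nat /\ x 2%nat <> x 1%nat.
Proof.
  split; [split|split]; [apply (chain_steiner Hf)|apply (chain_step Hf)| |]; try lia;
  intros E; apply (chain_inj Hf) in E; lia.
Qed.

Lemma bypass_nxt_ok a : (a < sink T)%nat ->
  bypass_nxt a <> x 1%nat /\ (bypass_nxt a <= sink T)%nat.
Proof.
  intros Ha. destruct first_steiner as (Hr & Hr0 & Hr2).
  unfold bypass_nxt. destruct (Nat.eqb_spec a (x 0%nat)).
  - split; auto. apply (chain_node Hf); lia.
  - split; [|apply nxt_le; auto]. intros E. apply (chain_pred Hf 1) in E; auto; lia.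
Qed.

Lemma occurs_tail w : occurs (shift x 2) w (p - 1) = true ->
  (length Z <= w < sink T)%nat /\ w <> x 1%nat.
Proof.
  intros H. apply occurs_true in H as [k [Hk <-]]. unfold shift.
  split; [split; [apply (chain_steiner Hf)|apply (chain_step Hf)]; lia|].
  intros E. apply (chain_inj Hf) in E; lia.
Qed.

Lemma occurs_tail_x k : (k <= p + 1)%nat ->
  occurs (shift x 2) (x k) (p - 1) = true <-> (2 <= k <= p)%nat.
Proof.
  intros Hk. rewrite occurs_true. unfold shift. split.
  - intros [j [Hj E]]. apply (chain_inj Hf) in E; lia.
  - intros Hk'. exists (k - 2)%nat. split; [lia|]. f_equal; lia.
Qed.

Lemma find_tail_x k : (2 <= k <= p)%nat -> find_index (shift x 2) (x k) (p - 1) = (k - 2)%nat.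
Proof.
  intros Hk. replace (x k) with (shift x 2 (k - 2)%nat) by (unfold shift; f_equal; lia).
  apply find_index_inj; [lia|]. intros i j Hi Hj E. apply (chain_inj Hf) in E; lia.
Qed.

Lemma contract_inflow w : (w <= sink T)%nat -> w <> x 1%nat ->
  rsum (fun i => if Nat.eqb (contract_nxt i) (new_index (x 1%nat) w) then contract_fl i else 0)
       (pred (sink T))
  = inflow T w.
Proof.
  intros Hw Hwr. destruct first_steiner as (Hr & Hr0 & Hr2).
  set (r := x 1%nat) in *.
  set (g := fun a => if Nat.eqb (new_index r (bypass_nxt a)) (new_index r w) then fl T a else 0).
  pose proof (rsum_skip g (pred (sink T)) r ltac:(lia)) as Hs.
  replace (S (pred (sink T))) with (sink T) in Hs by lia.
  change (rsum (fun i => g (old_index r i)) (pred (sink T)) = inflow T w).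
  unfold old_index. replace (rsum _ (pred (sink T))) with (rsum g (sink T) - g r) by lra.
  unfold inflow.
  rewrite (rsum_change g (fun u => if Nat.eqb (nxt T u) w then fl T u else 0) (sink T) (x 0%nat)).
  - pose proof (proj1 (chain_step Hf 0 ltac:(lia))).
    unfold g. rewrite !eqb_new_index by (auto; apply bypass_nxt_ok; auto; lia).
    unfold bypass_nxt. rewrite Nat.eqb_refl.
    destruct (Nat.eqb_spec r (x 0%nat)); [congruence|].
    rewrite (proj2 (chain_step Hf 0 ltac:(lia))).
    assert (Er : nxt T r = x 2%nat) by exact (proj2 (chain_step Hf 1 ltac:(lia))).
    assert (Fr : fl T r = f) by exact (chain_flow Hf 1 ltac:(lia)).
    rewrite Er, Fr, (chain_flow Hf 0) by lia. change (x 1%nat) with r.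
    destruct (Nat.eqb_spec r w); [congruence|].
    destruct (Nat.eqb_spec (x 2%nat) w); lra.
  - apply (chain_step Hf); lia.
  - intros u Hu Hne. unfold g. rewrite eqb_new_index by (auto; apply bypass_nxt_ok; auto).
    unfold bypass_nxt. destruct (Nat.eqb_spec u (x 0%nat)); [congruence|]. reflexivity.
Qed.

Lemma contract_reach k v : (v <= sink T)%nat -> v <> x 1%nat -> Nat.iter k (nxt T) v = sink T ->
  exists k', Nat.iter k' contract_nxt (new_index (x 1%nat) v) = new_index (x 1%nat) (sink T).
Proof.
  destruct first_steiner as (Hr & Hr0 & Hr2).
  revert v; induction k as [k IH] using lt_wf_ind. intros v Hv Hvr Hk.
  destruct (Nat.eq_dec v (sink T)) as [->|]; [exists 0%nat; reflexivity|].
  destruct k as [|k]; [simpl in Hk; lia|].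
  rewrite Nat.iter_succ_r in Hk.
  assert (Hstep : contract_nxt (new_index (x 1%nat) v) = new_index (x 1%nat) (bypass_nxt v)).
  { unfold contract_nxt. rewrite old_new_index by auto. reflexivity. }
  destruct (Nat.eq_dec v (x 0%nat)) as [->|].
  - rewrite (proj2 (chain_step Hf 0 ltac:(lia))) in Hk.
    destruct k as [|k]; [simpl in Hk; lia|].
    rewrite Nat.iter_succ_r, (proj2 (chain_step Hf 1 ltac:(lia))) in Hk.
    destruct (IH k ltac:(lia) (x 2%nat) ltac:(apply (chain_node Hf); lia) Hr2 Hk) as [k' Hk'].
    exists (S k'). rewrite Nat.iter_succ_r, Hstep. unfold bypass_nxt. rewrite Nat.eqb_refl. auto.
  - destruct (bypass_nxt_ok v ltac:(lia)) as [A1 A2].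
    unfold bypass_nxt in A1, A2 |- *. destruct (Nat.eqb_spec v (x 0%nat)); [congruence|].
    destruct (IH k ltac:(lia) (nxt T v) A2 A1 Hk) as [k' Hk'].
    exists (S k'). rewrite Nat.iter_succ_r, Hstep. unfold bypass_nxt.
    destruct (Nat.eqb_spec v (x 0%nat)); [congruence|]. auto.
Qed.

Lemma contract_old_steiner j : (j < pred (nS T))%nat ->
  (length Z <= old_index (x 1%nat) (length Z + j) < sink T)%nat.
Proof.
  intros Hj. destruct first_steiner as [Hr _].
  pose proof (old_index_cases (x 1%nat) (length Z + j)). unfold sink in *. lia.
Qed.

Lemma contract_src_valid j : (j < pred (nS T))%nat -> valid_source T 1 (p - 1) (contract_src j).
Proof.
  intros Hj. pose proof (contract_old_steiner j Hj). unfold contract_src.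
  destruct (occurs (shift x 2) _ (p - 1)) eqn:E; simpl.
  - destruct (find_index_spec _ _ _ E). lia.
  - unfold sink in *. lia.
Qed.

Lemma contract_src_inj i j : (i < pred (nS T))%nat -> (j < pred (nS T))%nat ->
  contract_src i = contract_src j -> i = j.
Proof.
  intros Hi Hj. pose proof (contract_old_steiner i Hi). pose proof (contract_old_steiner j Hj).
  unfold contract_src.
  assert (Hold : old_index (x 1%nat) (length Z + i) = old_index (x 1%nat) (length Z + j) -> i = j).
  { intros E. apply (f_equal (new_index (x 1%nat))) in E. rewrite !new_old_index in E. lia. }
  destruct (occurs (shift x 2) (old_index (x 1%nat) (length Z + i)) (p - 1)) eqn:Ei;
  destruct (occurs (shift x 2) (old_index (x 1%nat) (length Z + j)) (p - 1)) eqn:Ej;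
  intros E; try discriminate; injection E as E; apply Hold.
  - destruct (find_index_spec _ _ _ Ei) as [_ E1], (find_index_spec _ _ _ Ej) as [_ E2].
    congruence.
  - lia.
Qed.

Lemma contract_build Y : fresh_positions T Y 1 (p - 1) ->
  exists T' : FQST Z zBS, S (nS T') = nS T /\ (forall i, spt T' i = contract_spt Y i) /\
    (forall w, nxt T' w = contract_nxt w) /\ (forall w, fl T' w = contract_fl w).
Proof.
  intros HY. pose proof (proj1 first_steiner) as Hr.
  assert (HnS : (1 <= nS T)%nat) by (unfold sink in Hr; lia).
  assert (EN : (length Z + pred (nS T) = pred (sink T))%nat) by (unfold sink; lia).
  unshelve eexists (Build_FQST Z zBS (pred (nS T)) (contract_spt Y) contract_nxt contract_fl
                      _ _ _ _ _ _ _ _ _);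
    [ | | | | | | | | | split; [simpl; lia|repeat split; reflexivity]].
  - intros i j Hi Hj E. apply contract_src_inj; auto.
    apply (place_inj T Y 1 (p - 1)); auto; apply contract_src_valid; auto.
  - intros i Hi. apply (place_notZ T Y 1 (p - 1)); auto. apply contract_src_valid; auto.
  - intros i Hi. apply (place_notBS T Y 1 (p - 1)); auto. apply contract_src_valid; auto.
  - intros v Hv. rewrite EN in *. unfold contract_nxt.
    pose proof (old_index_lt (x 1%nat) v (sink T) ltac:(lia) Hv) as Hov.
    destruct (bypass_nxt_ok _ Hov) as [A1 A2]. apply new_index_le; auto; lia.
  - intros v Hv. rewrite EN in *.
    pose proof (old_index_lt (x 1%nat) v (sink T) ltac:(lia) Hv) as Hov.
    destruct (reach_sink Z zBS T (old_index (x 1%nat) v) ltac:(unfold sink in Hov; lia)) as [k Hk].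
    destruct (contract_reach k (old_index (x 1%nat) v) ltac:(lia) (old_index_ne _ _) Hk)
      as [k' Hk'].
    rewrite new_old_index, new_index_gt in Hk' by lia. eauto.
  - intros v Hv. rewrite EN in *. unfold contract_fl. apply fl_pos.
    pose proof (old_index_lt (x 1%nat) v (sink T) ltac:(lia) Hv). unfold sink in *; lia.
  - intros v Hv. rewrite EN.
    pose proof (contract_inflow v ltac:(unfold sink in *; lia) ltac:(lia)) as Hi.
    rewrite new_index_lt in Hi by lia. rewrite Hi.
    unfold contract_fl. rewrite old_index_small by lia. apply cons_source; auto.
  - intros v Hv. rewrite EN in *.
    pose proof (old_index_lt (x 1%nat) v (sink T) ltac:(lia) ltac:(lia)) as Hov.
    pose proof (contract_inflow (old_index (x 1%nat) v) ltac:(lia) (old_index_ne _ _)) as Hi.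
    rewrite new_old_index in Hi. rewrite Hi. unfold contract_fl. apply cons_steiner.
    split; [apply old_index_ge; lia|unfold sink in Hov; lia].
  - rewrite EN.
    pose proof (contract_inflow (sink T) ltac:(lia) ltac:(lia)) as Hi.
    rewrite new_index_gt in Hi by lia. rewrite Hi. apply cons_sink.
Qed.

Definition contract_pos (Y : nat -> point) (w : nat) : point :=
  if occurs (shift x 2) w (p - 1) then Y (S (find_index (shift x 2) w (p - 1))) else node_pos T w.

Section Positions.
Variables (Y : nat -> point) (T' : FQST Z zBS).
Hypotheses (HnS : S (nS T') = nS T) (Hspt : forall i, spt T' i = contract_spt Y i).

Lemma contract_node_pos w : (w <= sink T)%nat -> w <> x 1%nat ->
  node_pos T' (new_index (x 1%nat) w) = contract_pos Y w.
Proof.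
  intros Hw Hwr. destruct first_steiner as (Hr & _ & _).
  unfold contract_pos. unfold sink in *.
  destruct (Nat.eq_dec w (length Z + nS T)) as [->|].
  - rewrite new_index_gt by lia.
    destruct (occurs (shift x 2) (length Z + nS T) (p - 1)) eqn:E.
    { apply occurs_tail in E. unfold sink in E. lia. }
    unfold node_pos, sink.
    destruct (Nat.ltb_spec (pred (length Z + nS T)) (length Z)),
      (Nat.ltb_spec (pred (length Z + nS T)) (length Z + nS T')),
      (Nat.ltb_spec (length Z + nS T) (length Z)),
      (Nat.ltb_spec (length Z + nS T) (length Z + nS T)); try lia. reflexivity.
  - unfold node_pos, sink. destruct (Nat.ltb_spec w (length Z)).
    + rewrite new_index_lt by lia. destruct (Nat.ltb_spec w (length Z)); [|lia].
      destruct (occurs (shift x 2) w (p - 1)) eqn:E; [|reflexivity].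
      apply occurs_tail in E. lia.
    + assert (Hnw : (length Z <= new_index (x 1%nat) w < length Z + nS T')%nat).
      { unfold new_index. destruct (Nat.ltb_spec w (x 1%nat)); lia. }
      destruct (Nat.ltb_spec (new_index (x 1%nat) w) (length Z)),
        (Nat.ltb_spec (new_index (x 1%nat) w) (length Z + nS T')),
        (Nat.ltb_spec w (length Z + nS T)); try lia.
      rewrite Hspt. unfold contract_spt, contract_src.
      replace (length Z + (new_index (x 1%nat) w - length Z))%nat with (new_index (x 1%nat) w) by lia.
      rewrite old_new_index by auto.
      destruct (occurs (shift x 2) w (p - 1)); reflexivity.
Qed.

Lemma contract_pos_chain k : Y 0%nat = node_pos T (x 0%nat) -> Y p = node_pos T (x (S p)) ->
  (k <= p + 1)%nat -> k <> 1%nat -> contract_pos Y (x k) = Y (pred k).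
Proof.
  intros HY0 HY1 Hk Hk1. unfold contract_pos.
  destruct (occurs (shift x 2) (x k) (p - 1)) eqn:E.
  - apply (occurs_tail_x k Hk) in E. rewrite find_tail_x by auto. f_equal; lia.
  - assert (~ (2 <= k <= p)%nat) by (rewrite <- occurs_tail_x; congruence).
    destruct k as [|k]; auto. replace k with p by lia. auto.
Qed.

Lemma contract_edge_cost_off v : (v < sink T)%nat -> occurs x v (S p) = false ->
  fl T v * dist2 (contract_pos Y v) (contract_pos Y (bypass_nxt v)) = edge_cost T v.
Proof.
  intros Hv Hin. rewrite occurs_false in Hin.
  assert (Hv1 : occurs (shift x 2) v (p - 1) = false).
  { apply occurs_false. intros k Hk E. apply (Hin (S (S k))); [lia|auto]. }
  assert (Hv2 : occurs (shift x 2) (nxt T v) (p - 1) = false).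
  { apply occurs_false. intros k Hk E. unfold shift in E. symmetry in E.
    apply (chain_pred Hf) in E; try lia. apply (Hin (S k)); [lia|]. rewrite E. f_equal; lia. }
  unfold contract_pos, edge_cost, bypass_nxt. destruct (Nat.eqb_spec v (x 0%nat)).
  { exfalso. apply (Hin 0%nat); [lia|auto]. }
  rewrite Hv1, Hv2. reflexivity.
Qed.

Lemma contract_cost : Y 0%nat = node_pos T (x 0%nat) -> Y p = node_pos T (x (S p)) ->
  (forall w, nxt T' w = contract_nxt w) -> (forall w, fl T' w = contract_fl w) ->
  cost T' = off_chain_cost T p x + f * rsum (fun k => dist2 (Y k) (Y (S k))) p.
Proof.
  intros HY0 HY1 Hnxt Hfl. pose proof (proj1 first_steiner) as Hr.
  set (r := x 1%nat) in *.
  set (g := fun a => fl T a * dist2 (node_pos T' (new_index r a))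
                                    (node_pos T' (new_index r (bypass_nxt a)))).
  set (h := fun a => fl T a * dist2 (contract_pos Y a) (contract_pos Y (bypass_nxt a))).
  unfold cost. replace (sink T') with (pred (sink T)) by (unfold sink in *; lia).
  rewrite (rsum_ext _ (fun i => g (old_index r i))).
  2:{ intros i Hi. unfold g. rewrite Hfl, Hnxt, new_old_index. reflexivity. }
  pose proof (rsum_skip g (pred (sink T)) r ltac:(lia)) as Hs.
  replace (S (pred (sink T))) with (sink T) in Hs by lia. unfold old_index.
  assert (Hgh : rsum g (sink T) = rsum h (sink T) + g r - h r).
  { apply rsum_change; [lia|]. intros a Ha Hne. unfold g, h.
    destruct (bypass_nxt_ok a Ha). rewrite !contract_node_pos by (auto; lia). reflexivity. }
  rewrite (rsum_mask h x (sink T) (S p)) in Hgh.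
  2:{ intros k Hk. apply (chain_step Hf); lia. }
  2:{ intros i j Hi Hj E. apply (chain_inj Hf); auto; lia. }
  assert (Hoff : rsum (fun v => if occurs x v (S p) then 0 else h v) (sink T) = off_chain_cost T p x).
  { apply rsum_ext. intros v Hv. destruct (occurs x v (S p)) eqn:E; auto.
    apply contract_edge_cost_off; auto. }
  assert (H0 : h (x 0%nat) = f * dist2 (Y 0%nat) (Y 1%nat)).
  { unfold h. rewrite (chain_flow Hf) by lia. unfold bypass_nxt. rewrite Nat.eqb_refl.
    rewrite !contract_pos_chain by (auto; lia). reflexivity. }
  assert (Hk : forall k, (k < p - 1)%nat -> h (x (S (S k))) = f * dist2 (Y (S k)) (Y (S (S k)))).
  { intros k Hk. unfold h. rewrite (chain_flow Hf) by lia. unfold bypass_nxt.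
    destruct (Nat.eqb_spec (x (S (S k))) (x 0%nat)) as [E|]; [apply (chain_inj Hf) in E; lia|].
    rewrite (proj2 (chain_step Hf (S (S k)) ltac:(lia))), !contract_pos_chain by (auto; lia).
    reflexivity. }
  rewrite Hoff, rsum_shift in Hgh.
  replace p with (S (p - 1)) in Hgh at 2 by lia. replace p with (S (p - 1)) at 2 by lia.
  rewrite (rsum_shift (fun i => h (x (S i)))) in Hgh. rewrite rsum_shift.
  rewrite (rsum_ext (fun k => h (x (S (S k)))) (fun k => f * dist2 (Y (S k)) (Y (S (S k)))))
    in Hgh by auto.
  rewrite rsum_scal, H0 in Hgh. fold r in Hgh. lra.
Qed.

End Positions.
End Contraction.

Lemma spacing_end m e : (1 <= m)%nat -> spacing m e m = 1.
Proof. intros Hm. unfold spacing. destruct (Nat.eqb_spec m 0); [lia|]. now rewrite Nat.eqb_refl. Qed.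

(* a/P - a/(P+1) = a/(P(P+1)) turns the contraction inequality into the lower bound. *)
Lemma ratio_lower (a c P : R) : 0 < c -> 0 < P -> a / (P + 1) + c <= a / P -> P * (P + 1) <= a / c.
Proof.
  intros Hc HP H.
  assert (Hc' : c <= a / (P * (P + 1))).
  { replace (a / (P * (P + 1))) with (a / P - a / (P + 1)) by (field; lra). lra. }
  apply (Rmult_le_reg_r c); auto. replace (a / c * c) with a by (field; lra).
  apply (Rmult_le_compat_l (P * (P + 1))) in Hc'; [|nra].
  replace (P * (P + 1) * (a / (P * (P + 1)))) with a in Hc' by (field; lra). lra.
Qed.

(* Likewise a/(P+1) - a/(P+2) = a/((P+1)(P+2)) gives the upper bound. *)
Lemma ratio_upper (a c P : R) : 0 < c -> 0 <= P -> a / (P + 1) <= c + a / (P + 2) ->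
  a / c <= (P + 2) * (P + 1).
Proof.
  intros Hc HP H.
  assert (Hc' : a / ((P + 1) * (P + 2)) <= c).
  { replace (a / ((P + 1) * (P + 2))) with (a / (P + 1) - a / (P + 2)) by (field; lra). lra. }
  apply (Rmult_le_reg_r c); auto. replace (a / c * c) with a by (field; lra).
  apply (Rmult_le_compat_l ((P + 1) * (P + 2))) in Hc'; [|nra].
  replace ((P + 1) * (P + 2) * (a / ((P + 1) * (P + 2)))) with a in Hc' by (field; lra). nra.
Qed.

Section Bounds.
Context {Z : list point} {zBS : point}.
Variables (c : R) (T : FQST Z zBS) (p : nat) (x : nat -> nat) (f : R).
Hypotheses (HZ : NoDup Z) (HB : ~ In zBS Z) (Hmin : is_MFQST c T) (Hf : chain T p x f).

Let u := node_pos T (x 0%nat).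
Let v := node_pos T (x (S p)).

Definition chain_energy : R :=
  rsum (fun k => dist2 (node_pos T (x k)) (node_pos T (x (S k)))) (S p).

Lemma chain_ends_distinct : u <> v.
Proof.
  intros E. apply node_pos_inj in E; auto; try (apply (chain_node Hf); lia).
  apply (chain_inj Hf) in E; lia.
Qed.

Lemma chain_energy_cs : dist2 u v <= INR (S p) * chain_energy.
Proof. apply (polygon_cs (fun k => node_pos T (x k)) (S p)). Qed.

(* Deleting x 1 and spreading x 2..x p evenly over uv cannot pay off. *)
Lemma contraction_bound : (1 <= p)%nat -> f * chain_energy + c <= f * dist2 u v / INR p.
Proof.
  intros Hp. pose proof (chain_flow_pos T p x f Hf). pose proof (dist2_nonneg u v).
  apply (limit_arg _ _ (2 * f * dist2 u v)); [nra|]. intros d Hd.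
  destruct (spacing_fresh T u v p d chain_ends_distinct Hd) as [e [He HY]].
  exists e. split; auto.
  set (Y := fun k => seg_point u v (spacing p e k)).
  destruct (contract_build T p x f Hf Hp Y HY) as [T' (HnS & Hspt & Hnxt & Hfl)].
  assert (HY0 : Y 0%nat = u) by apply seg_point0.
  assert (HY1 : Y p = v) by (unfold Y; rewrite spacing_end by lia; apply seg_point1).
  pose proof (contract_cost T p x f Hf Hp Y T' HnS Hspt HY0 HY1 Hnxt Hfl) as Hc'.
  pose proof (Hmin T') as Hm. unfold costc in Hm.
  rewrite (cost_split T p x f Hf), Hc', <- HnS, S_INR in Hm. fold chain_energy in Hm.
  assert (Hpath : rsum (fun k => dist2 (Y k) (Y (S k))) p <= dist2 u v * (1 / INR p + 2 * e ^ 2))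
    by (apply spacing_path_cost; auto).
  apply (Rmult_le_compat_l f) in Hpath; [|lra].
  replace (f * (dist2 u v * (1 / INR p + 2 * e ^ 2)))
    with (f * dist2 u v / INR p + 2 * f * dist2 u v * e ^ 2) in Hpath
    by (field; apply not_0_INR; lia).
  lra.
Qed.

(* Inserting a Steiner point and spreading the p+1 interior points evenly
   over uv cannot pay off either. *)
Lemma subdivision_bound : f * chain_energy <= c + f * dist2 u v / INR (S (S p)).
Proof.
  pose proof (chain_flow_pos T p x f Hf). pose proof (dist2_nonneg u v).
  apply (limit_arg _ _ (2 * f * dist2 u v)); [nra|]. intros d Hd.
  destruct (spacing_fresh T u v (S (S p)) d chain_ends_distinct Hd) as [e [He HY]].
  exists e. split; auto.
  set (Y := fun k => seg_point u v (spacing (S (S p)) e k)).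
  replace (S (S p) - 1)%nat with (S p) in HY by lia.
  destruct (subdiv_build T p x f Hf Y HY) as [T' (HnS & Hspt & Hnxt & Hfl)].
  assert (HY0 : Y 0%nat = u) by apply seg_point0.
  assert (HY1 : Y (S (S p)) = v) by (unfold Y; rewrite spacing_end by lia; apply seg_point1).
  pose proof (subdiv_cost T p x f Hf Y T' HnS Hspt HY0 HY1 Hnxt Hfl) as Hc'.
  pose proof (Hmin T') as Hm. unfold costc in Hm.
  rewrite (cost_split T p x f Hf), Hc', HnS, S_INR in Hm. fold chain_energy in Hm.
  assert (Hpath : rsum (fun k => dist2 (Y k) (Y (S k))) (S (S p))
                  <= dist2 u v * (1 / INR (S (S p)) + 2 * e ^ 2))
    by (apply spacing_path_cost; lia).
  apply (Rmult_le_compat_l f) in Hpath; [|lra].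
  replace (f * (dist2 u v * (1 / INR (S (S p)) + 2 * e ^ 2)))
    with (f * dist2 u v / INR (S (S p)) + 2 * f * dist2 u v * e ^ 2) in Hpath
    by (field; apply not_0_INR; lia).
  lra.
Qed.

Lemma chain_bounds : 0 < c ->
  INR p * INR (p + 1) <= f * dist2 u v / c <= INR (p + 2) * INR (p + 1).
Proof.
  intros Hc. pose proof (chain_flow_pos T p x f Hf).
  pose proof chain_energy_cs as Hcs.
  assert (HSp : 0 < INR (S p)) by (apply lt_0_INR; lia).
  assert (HL : f * dist2 u v / INR (S p) <= f * chain_energy).
  { apply (Rmult_le_reg_r (INR (S p))); auto.
    replace (f * dist2 u v / INR (S p) * INR (S p)) with (f * dist2 u v) by (field; lra). nra. }
  replace (p + 1)%nat with (S p) by lia. replace (p + 2)%nat with (S (S p)) by lia.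
  rewrite !S_INR in *. split.
  - destruct (Nat.eq_dec p 0) as [->|Hp].
    + simpl INR. rewrite Rmult_0_l. unfold Rdiv.
      apply Rmult_le_pos; [apply Rmult_le_pos; [lra|apply dist2_nonneg]|].
      left. apply Rinv_0_lt_compat; lra.
    + pose proof (contraction_bound ltac:(lia)).
      apply ratio_lower; auto; [apply lt_0_INR; lia|lra].
  - pose proof subdivision_bound as Hsub. rewrite !S_INR in Hsub.
    replace (INR p + 1 + 1) with (INR p + 2) in * by ring.
    apply ratio_upper; auto; [apply pos_INR|lra].
Qed.

End Bounds.

Section Orientation.
Context {Z : list point} {zBS : point}.
Variables (T : FQST Z zBS) (p : nat) (x : nat -> nat) (f : R).
Hypotheses (Hpath : is_path T p x)
  (Hdeg2 : forall i, (1 <= i <= p)%nat -> is_steiner T (x i) /\ degree T (x i) = 2%nat)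
  (Hflow : forall i, (i <= p)%nat -> edge_flow T (x i) (x (S i)) = f).

Definition forward_edge (j : nat) : Prop := (x j < sink T)%nat /\ nxt T (x j) = x (S j).
Definition backward_edge (j : nat) : Prop := (x (S j) < sink T)%nat /\ nxt T (x (S j)) = x j.

(* A Steiner point has its out-edge, so degree 2 means exactly one in-edge. *)
Lemma interior_indeg1 i : (1 <= i <= p)%nat -> indeg T (x i) = 1%nat.
Proof.
  intros Hi. destruct (Hdeg2 i Hi) as [[_ Hs] Hd]. unfold degree in Hd.
  destruct (Nat.ltb_spec (x i) (sink T)); lia.
Qed.

Lemma path_edge j : (j <= p)%nat -> forward_edge j \/ backward_edge j.
Proof. intros Hj. destruct Hpath as (_ & _ & Hadj). apply Hadj; auto. Qed.

(* At an interior node the orientation cannot flip: two in-edges would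
   contradict in-degree 1, two out-edges contradict uniqueness of nxt. *)
Lemma forward_propagates : forward_edge 0 -> forall j, (j <= p)%nat -> forward_edge j.
Proof.
  destruct Hpath as (_ & Hinj & _).
  intros H0 j. induction j as [|j IH]; intros Hj; auto.
  destruct (IH ltac:(lia)) as [A1 A2]. destruct (path_edge (S j) Hj) as [|[B1 B2]]; auto.
  exfalso. assert (E : x j = x (S (S j)))
    by (apply (indeg1_pred_unique T (x (S j))); auto; apply interior_indeg1; lia).
  apply Hinj in E; lia.
Qed.

Lemma backward_propagates : backward_edge 0 -> forall j, (j <= p)%nat -> backward_edge j.
Proof.
  destruct Hpath as (_ & Hinj & _).
  intros H0 j. induction j as [|j IH]; intros Hj; auto.
  destruct (IH ltac:(lia)) as [A1 A2]. destruct (path_edge (S j) Hj) as [[B1 B2]|]; auto.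
  exfalso. rewrite A2 in B2. apply Hinj in B2; lia.
Qed.

Lemma forward_chain : forward_edge 0 -> chain T p x f.
Proof.
  intros H0. pose proof (forward_propagates H0) as Hfw. destruct Hpath as (Hnode & Hinj & _).
  constructor.
  - exact Hnode.
  - exact Hinj.
  - exact Hfw.
  - intros i Hi. apply (Hdeg2 i Hi).
  - intros i Hi u Hu E. destruct (Hfw (i - 1)%nat ltac:(lia)) as [A1 A2].
    replace (S (i - 1)) with i in A2 by lia.
    apply (indeg1_pred_unique T (x i)); auto. apply interior_indeg1; auto.
  - intros i Hi. rewrite <- (Hflow i Hi). unfold edge_flow.
    destruct (Hfw i Hi) as [A1 A2].
    destruct (Nat.ltb_spec (x i) (sink T)); [|lia]. rewrite A2, Nat.eqb_refl. reflexivity.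
Qed.

Lemma backward_chain : backward_edge 0 -> chain T p (fun j => x (p + 1 - j)%nat) f.
Proof.
  intros H0. pose proof (backward_propagates H0) as Hbw. destruct Hpath as (Hnode & Hinj & _).
  assert (Hstep : forall i, (i <= p)%nat ->
            x (p + 1 - i)%nat = x (S (p - i)) /\ x (p + 1 - S i)%nat = x (p - i)%nat).
  { intros i Hi. split; f_equal; lia. }
  constructor.
  - intros i Hi. apply Hnode; lia.
  - intros i j Hi Hj E. apply Hinj in E; lia.
  - intros i Hi. destruct (Hstep i Hi) as [-> ->]. apply Hbw; lia.
  - intros i Hi. apply (Hdeg2 (p + 1 - i)%nat); lia.
  - intros i Hi u Hu E. destruct (Hbw (p + 1 - i)%nat ltac:(lia)) as [A1 A2].
    replace (p + 1 - (i - 1))%nat with (S (p + 1 - i)) by lia.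
    apply (indeg1_pred_unique T (x (p + 1 - i)%nat)); auto. apply interior_indeg1; lia.
  - intros i Hi. destruct (Hstep i Hi) as [-> _]. destruct (Hbw (p - i)%nat ltac:(lia)) as [A1 A2].
    rewrite <- (Hflow (p - i)%nat) by lia. unfold edge_flow.
    destruct (Nat.ltb_spec (x (p - i)%nat) (sink T)); simpl; [|reflexivity].
    destruct (Nat.eqb_spec (nxt T (x (p - i)%nat)) (x (S (p - i)))); [|reflexivity].
    exfalso. apply (no_2cycle T (x (p - i)%nat) (x (S (p - i)))); auto.
Qed.

End Orientation.

Theorem mainTheorem13 (Z : list point) (zBS : point) (c : R)
  (T : FQST Z zBS) (p : nat) (x : nat -> nat) (f : R) :
  (1 <= length Z)%nat ->
  NoDup Z ->
  ~ In zBS Z ->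
  0 < c ->
  is_MFQST c T ->
  is_path T p x ->
  (forall i, (1 <= i <= p)%nat -> is_steiner T (x i) /\ degree T (x i) = 2%nat) ->
  (forall i, (i <= p)%nat -> edge_flow T (x i) (x (S i)) = f) ->
  INR p * INR (p + 1) <= f * dist2 (node_pos T (x 0%nat)) (node_pos T (x (p + 1)%nat)) / c
  <= INR (p + 2) * INR (p + 1).
Proof.
  intros _ HZ HB Hc Hmin Hpath Hdeg2 Hflow.
  destruct (path_edge T p x Hpath 0 ltac:(lia)) as [Hfw|Hbw].
  - pose proof (chain_bounds c T p x f HZ HB Hmin (forward_chain T p x f Hpath Hdeg2 Hflow Hfw) Hc)
      as Hb.
    replace (x (p + 1)%nat) with (x (S p)) by (f_equal; lia). exact Hb.
  - pose proof (chain_bounds c T p _ f HZ HB Hmin (backward_chain T p x f Hpath Hdeg2 Hflow Hbw) Hc)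
      as Hb.
    cbv beta in Hb. rewrite Nat.sub_0_r, dist2_sym in Hb.
    replace (p + 1 - S p)%nat with 0%nat in Hb by lia. exact Hb.
Qed.
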